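(* Let $n$ be odd and let $L=\bigoplus_{i\in\mathbb{Z}/n\mathbb{Z}}L_i$ be a $(\mathbb{Z}/n\mathbb{Z})$-graded Lie algebra over a field with $L_0=0$ that satisfies the selective metabelian condition. Let $d_1,d_2,d_3,d_4\in\mathbb{Z}/n\mathbb{Z}$ with $(d_1,d_2,d_3)$ $(-1)$-independent and $d_4\in D(d_1,d_2,d_3)$, and let $u_{d_i}\in L_{d_i}$. Then every product of the form $$\big[[u_{d_1},u_{d_2}],[u_{d_3},u_{d_4}],x_{i_1},\dots,x_{i_t}\big],$$ where each $x_{i_k}=[y_k,z_k]$ with $y_k\in L_{w_k}$, $z_k\in L_{i_k-w_k}$ for some $w_k\in\mathbb{Z}/n\mathbb{Z}$, can be written as a linear combination of products of the form $$\big[[u_{d_1},u_{d_2}],[u_{d_3},u_{d_4}],m_{j_1},\dots,m_{j_s}\big],$$ where $s\le t$ and each $m_{j_k}=[p_k,q_k]$ with $p_k\in L_{u_k}$, $q_k\in L_{j_k-u_k}$, such that $j_k\in\widetilde D(d_1,d_2,d_3,d_4)$ and at least one of $u_k$, $j_k-u_k$ belongs to $\widetilde D(d_1,d_2,d_3,d_4)$.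
   Context: A $(\mathbb{Z}/n\mathbb{Z})$-graded Lie algebra is $L=\bigoplus_{i=0}^{n-1}L_i$ with $[L_i,L_j]\subseteq L_{i+j \bmod n}$. Products $[y_1,\dots,y_s]$ are left-normed: $[\dots[[y_1,y_2],y_3],\dots,y_s]$. A sequence $(a_1,\dots,a_k)$ in $\mathbb{Z}/n\mathbb{Z}$ is $(-1)$-dependent if $t_1a_1+\dots+t_ka_k=0$ for some $t_i\in\{0,1\}$ not all zero, and $(-1)$-independent otherwise. For a $(-1)$-independent sequence $(a_1,\dots,a_k)$, $D(a_1,\dots,a_k)$ is the set of $j\in\mathbb{Z}/n\mathbb{Z}$ such that $(a_1,\dots,a_k,j)$ is $(-1)$-dependent. For any sequence $(b_1,\dots,b_s)$, $\widetilde D(b_1,\dots,b_s)$ is the set of all $u_1b_1+\dots+u_sb_s$ with $u_i\in\{0,\pm1,\pm2\}$. $L$ satisfies the selective metabelian condition if $\big[[x_{d_1},x_{d_2}],[x_{d_3},x_{d_4}]\big]=0$ for all $x_{d_i}\in L_{d_i}$ whenever $(d_1,d_2,d_3,d_4)$ is $(-1)$-independent. *)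

From HB Require Import structures.
From mathcomp Require Import all_boot all_order all_algebra.
Set Implicit Arguments. Unset Strict Implicit. Unset Printing Implicit Defensive.
Import GRing.Theory.
Local Open Scope ring_scope.

(* Index group Z/NZ is modelled as 'I_N with N = m.+1 (canonical zmodType). *)

Definition is_lie_bracket (K : fieldType) (L : lmodType K) (br : L -> L -> L) : Prop :=
  [/\ (forall (a : K) (x y z : L), br (a *: x + y) z = a *: br x z + br y z),
      (forall (a : K) (x y z : L), br z (a *: x + y) = a *: br z x + br z y),
      (forall x : L, br x x = 0) &
      (forall x y z : L, br x (br y z) + br y (br z x) + br z (br x y) = 0)].

Definition is_grading (K : fieldType) (L : lmodType K) (m : nat)
  (br : L -> L -> L) (G : 'I_m.+1 -> L -> Prop) : Prop :=
  [/\ (forall i, G i 0),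
      (forall i (a : K) (x y : L), G i x -> G i y -> G i (a *: x + y)),
      (forall x : L, exists f : 'I_m.+1 -> L, (forall i, G i (f i)) /\ x = \sum_i f i),
      (forall f : 'I_m.+1 -> L, (forall i, G i (f i)) -> \sum_i f i = 0 ->
          forall i, f i = 0) &
      (forall i j x y, G i x -> G j y -> G (i + j) (br x y))].

Definition minus1_dependent (N : nat) (a : seq 'I_N.+1) : Prop :=
  exists t : seq bool, size t = size a /\ has id t /\
    \sum_(k < size a) (if nth false t k then nth 0 a k else 0) = 0.

Definition minus1_independent (N : nat) (a : seq 'I_N.+1) : Prop :=
  ~ minus1_dependent a.

Definition Dset (N : nat) (a : seq 'I_N.+1) (j : 'I_N.+1) : Prop :=
  minus1_dependent (rcons a j).

Definition Dtilde (N : nat) (b : seq 'I_N.+1) (j : 'I_N.+1) : Prop :=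
  exists u : seq int, size u = size b /\
    (forall k, (k < size u)%N -> -2 <= nth 0 u k <= 2) /\
    j = \sum_(k < size b) (nth 0 b k) *~ (nth 0 u k).

Definition lnprod (L : Type) (br : L -> L -> L) (x0 : L) (xs : seq L) : L :=
  foldl br x0 xs.

Definition selective_metabelian (K : fieldType) (L : lmodType K) (m : nat)
  (br : L -> L -> L) (G : 'I_m.+1 -> L -> Prop) : Prop :=
  forall d1 d2 d3 d4 : 'I_m.+1, minus1_independent [:: d1; d2; d3; d4] ->
  forall x1 x2 x3 x4 : L, G d1 x1 -> G d2 x2 -> G d3 x3 -> G d4 x4 ->
    br (br x1 x2) (br x3 x4) = 0.

(* Write T = [[u1, u2], [u3, u4]].  First, [T, y] = 0 for every homogeneous y whose
   degree w lies outside Dtilde(d1, d2, d3, d4): the Jacobi identity expands [T, y] into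
   brackets [[x1, x2], [x3, x4]] of u's and one y.  A subsum of their degrees involving w
   is w plus a {0,1,2}-combination of the d_i, hence nonzero; the other subsums are
   nonzero by independence of (d1, d2, d3), except for a few sums involving d4, and when
   such a sum vanishes the matching bracket lies in L_0 = 0 and a different expansion
   is used.  So the selective metabelian condition kills every term.
   Second, a factor x = [y, z] that is not admissible satisfies [T, x] = 0: either
   deg x is outside Dtilde, or [T, x] = [[T, y], z] + [y, [T, z]] with both degrees
   outside Dtilde.  Such a factor is moved to the end by [P, m, x] = [P, x, m] + [P, [m, x]],
   where [m, x] is either a new admissible factor or again annihilates T; induction on
   the number of factors gives the result without increasing that number. *)

From HB Require Import structures.
From mathcomp Require Import all_boot all_order all_algebra.
From mathcomp Require Import zify.
From Stdlib Require Import Classical.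
Set Implicit Arguments. Unset Strict Implicit. Unset Printing Implicit Defensive.
Import GRing.Theory.
Local Open Scope ring_scope.

Lemma forall_nth_rcons (T : Type) (P : T -> Prop) x0 s x :
  (forall k, (k < size (rcons s x))%N -> P (nth x0 (rcons s x) k)) <->
  (forall k, (k < size s)%N -> P (nth x0 s k)) /\ P x.
Proof.
split=> [Ps | [Ps Px] k].
  split=> [k lt_k | ].
    by have := Ps k; rewrite size_rcons nth_rcons lt_k ltnS ltnW //; apply.
  by have := Ps (size s); rewrite size_rcons nth_rcons ltnn eqxx; apply.
rewrite size_rcons ltnS leq_eqVlt nth_rcons => /orP[/eqP -> | lt_k].
  by rewrite ltnn eqxx.
by rewrite lt_k; apply: Ps.
Qed.

Section LinearCombinations.
Variables (V : zmodType) (ds : seq V).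

Definition lincomb (c : seq nat) : V := \sum_(k < size ds) ds`_k *+ nth 0%N c k.

(* [Nat.add] and [Nat.max] rather than [addn] and [maxn], so that [cadd] of literal
   vectors computes under [simpl]. *)
Definition cadd (c c' : seq nat) : seq nat :=
  [seq Nat.add (nth 0%N c k) (nth 0%N c' k) | k <- iota 0 (Nat.max (size c) (size c'))].

Definition cscale (b : bool) (c : seq nat) : seq nat := if b then c else [::].

Definition cselect (b1 b2 b3 b4 : bool) (va vb vc vd : seq nat) : seq nat :=
  cadd (cscale b1 va) (cadd (cscale b2 vb) (cadd (cscale b3 vc) (cscale b4 vd))).

Lemma nth_cadd c c' k : nth 0%N (cadd c c') k = (nth 0%N c k + nth 0%N c' k)%N.
Proof.
have [lt_k | le_k] := ltnP k (Nat.max (size c) (size c')).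
  by rewrite (nth_map 0%N) ?size_iota // nth_iota.
by rewrite !nth_default ?size_map ?size_iota //; lia.
Qed.

Lemma nth_cscale b c k : nth 0%N (cscale b c) k = (nth 0%N c k * b)%N.
Proof. by case: b; rewrite /= ?muln1 ?muln0 ?nth_nil. Qed.

Lemma nth_cselect_le b1 b2 b3 b4 va vb vc vd k :
  (nth 0%N (cselect b1 b2 b3 b4 va vb vc vd) k
     <= nth 0%N (cselect true true true true va vb vc vd) k)%N.
Proof. by rewrite !nth_cadd !nth_cscale; case: b1 b2 b3 b4 => [] [] [] [] /=; lia. Qed.

Lemma lincomb_cadd c c' : lincomb (cadd c c') = lincomb c + lincomb c'.
Proof. by rewrite -big_split; apply: eq_bigr => k _; rewrite nth_cadd mulrnDr. Qed.

Lemma lincomb_cscale b c : lincomb (cscale b c) = lincomb c *+ b.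
Proof. by rewrite -sumrMnl; apply: eq_bigr => k _; rewrite nth_cscale mulrnA. Qed.

Lemma lincomb_neq0_compl c c' :
  lincomb (cadd c c') = 0 -> lincomb c != 0 -> lincomb c' != 0.
Proof. by rewrite lincomb_cadd => sum0; apply: contraNneq => c'0; rewrite -sum0 c'0 addr0. Qed.

Lemma eq_lincomb c c' :
  (forall k, (k < size ds)%N -> nth 0%N c k = nth 0%N c' k) -> lincomb c = lincomb c'.
Proof. by move=> eq_c; apply: eq_bigr => k _; rewrite eq_c. Qed.

End LinearCombinations.

Lemma lincomb4 (V : zmodType) (a b c e : V) x1 x2 x3 x4 :
  lincomb [:: a; b; c; e] [:: x1; x2; x3; x4] = a *+ x1 + b *+ x2 + c *+ x3 + e *+ x4.
Proof. by rewrite /lincomb !big_ord_recl big_ord0 /= addr0 !addrA. Qed.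

Lemma lincomb_rcons (V : zmodType) (ds : seq V) d c :
  lincomb (rcons ds d) c = lincomb ds c + d *+ nth 0%N c (size ds).
Proof.
rewrite /lincomb size_rcons big_ord_recr nth_rcons ltnn eqxx /=.
by congr (_ + _); apply: eq_bigr => k _; rewrite nth_rcons ltn_ord.
Qed.

Section CyclicDegrees.
Variable N : nat.
Implicit Types (a ds : seq 'I_N.+1) (w : 'I_N.+1).

Lemma minus1_independentP a :
  minus1_independent a <->
  (forall t : seq bool, size t = size a -> has id t -> lincomb a (map nat_of_bool t) != 0).
Proof.
have sumE t : size t = size a ->
    \sum_(k < size a) (if nth false t k then a`_k else 0) = lincomb a (map nat_of_bool t).
  by move=> sz_t; apply: eq_bigr => k _; rewrite (nth_map false) ?sz_t //; case: nth.
split=> [indep t sz_t has_t | nz [t [sz_t [has_t]]]].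
  by apply/eqP => sum0; apply: indep; exists t; rewrite sumE.
by rewrite sumE //; apply/eqP/nz.
Qed.

Lemma lincomb_notin_Dtilde ds w c :
  ~ Dtilde ds w -> (forall k, nth 0%N c k <= 2)%N -> w + lincomb ds c != 0.
Proof.
move=> w_notin le_c2; apply/eqP => sum0; apply: w_notin.
exists [seq - (nth 0%N c k)%:Z | k <- iota 0 (size ds)]; rewrite size_map size_iota.
split=> //; split=> [k | ].
  move=> lt_k; rewrite (nth_map 0%N) ?size_iota // nth_iota //.
  by have := le_c2 k; rewrite add0n => le_c2k; apply/andP; split; lia.
apply/eqP; rewrite -(addrK (lincomb ds c) w) sum0 sub0r eq_sym -sumrN; apply/eqP.
apply: eq_bigr => k _; rewrite (nth_map 0%N) ?size_iota // nth_iota //.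
by rewrite add0n mulrNz -pmulrn.
Qed.

Lemma lincomb_indep_neq0 a d (t : seq bool) :
  minus1_independent a -> size t = size a -> has id t ->
  lincomb (rcons a d) (rcons (map nat_of_bool t) 0%N) != 0.
Proof.
move=> /minus1_independentP indep sz_t has_t.
have sz_mt : size (map nat_of_bool t) = size a by rewrite size_map.
rewrite lincomb_rcons nth_rcons sz_mt ltnn eqxx mulr0n addr0.
rewrite (@eq_lincomb _ _ _ (map nat_of_bool t)) ?indep // => k lt_k.
by rewrite nth_rcons sz_mt lt_k.
Qed.

End CyclicDegrees.

Section LieBracket.
Variables (K : fieldType) (L : lmodType K) (br : L -> L -> L).
Hypothesis brL : is_lie_bracket br.

Lemma brDl x y z : br (x + y) z = br x z + br y z.
Proof. by case: brL => linl _ _ _; have := linl 1 x y z; rewrite !scale1r. Qed.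

Lemma brDr x y z : br z (x + y) = br z x + br z y.
Proof. by case: brL => _ linr _ _; have := linr 1 x y z; rewrite !scale1r. Qed.

Lemma br0l z : br 0 z = 0.
Proof. by apply: (addrI (br 0 z)); rewrite -brDl !addr0. Qed.

Lemma br0r z : br z 0 = 0.
Proof. by apply: (addrI (br z 0)); rewrite -brDr !addr0. Qed.

Lemma brZl a x z : br (a *: x) z = a *: br x z.
Proof. by case: brL => linl _ _ _; have := linl a x 0 z; rewrite !addr0 br0l addr0. Qed.

Lemma brNl x z : br (- x) z = - br x z.
Proof. by rewrite -scaleN1r brZl scaleN1r. Qed.

Lemma brNr x z : br z (- x) = - br z x.
Proof.
by case: brL => _ linr _ _; have := linr (-1) x 0 z; rewrite !addr0 br0r addr0 !scaleN1r.
Qed.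

Lemma br_anti x y : br x y = - br y x.
Proof.
case: brL => _ _ alt _; apply/eqP; rewrite -addr_eq0.
by have := alt (x + y); rewrite brDl !brDr !alt add0r addr0 addrC => ->.
Qed.

Lemma br_eq0_sym x y : br y x = 0 -> br x y = 0.
Proof. by move=> yx0; rewrite br_anti yx0 oppr0. Qed.

Lemma br_leibnizl a b x : br (br a b) x = br (br a x) b + br a (br b x).
Proof.
case: brL => _ _ _ jacobi; have := jacobi a b x.
rewrite [br b (br x a)]br_anti [br x a]br_anti brNl opprK [br x (br a b)]br_anti.
by move/eqP; rewrite subr_eq0 addrC => /eqP.
Qed.

Lemma br_leibnizr x a b : br x (br a b) = br (br x a) b + br a (br x b).
Proof. by rewrite br_anti br_leibnizl opprD [br x a]br_anti [br x b]br_anti brNl brNr. Qed.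

Lemma br_suml I (r : seq I) (F : I -> L) z :
  br (\sum_(i <- r) F i) z = \sum_(i <- r) br (F i) z.
Proof. exact: (big_morph (br^~ z) (fun x y => brDl x y z) (br0l z)). Qed.

End LieBracket.

Lemma G_br (K : fieldType) (L : lmodType K) m (br : L -> L -> L) (G : 'I_m.+1 -> L -> Prop) :
  is_grading br G -> forall i j x z, G i x -> G j z -> G (i + j) (br x z).
Proof. by case. Qed.

Section AnnihilatorOfT.
Variables (K : fieldType) (L : lmodType K) (m : nat) (br : L -> L -> L)
  (G : 'I_m.+1 -> L -> Prop).
Hypotheses (brL : is_lie_bracket br) (grL : is_grading br G)
  (G0 : forall x, G 0 x -> x = 0) (smL : selective_metabelian br G).
Variables d1 d2 d3 d4 : 'I_m.+1.
Hypothesis ind123 : minus1_independent [:: d1; d2; d3].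
Variables u1 u2 u3 u4 : L.
Hypotheses (G1 : G d1 u1) (G2 : G d2 u2) (G3 : G d3 u3) (G4 : G d4 u4).
Variables (w : 'I_m.+1) (y : L).
Hypotheses (Gy : G w y) (w_notin : ~ Dtilde [:: d1; d2; d3; d4] w).

(* Degrees are kept as coefficient vectors over (d1, d2, d3, d4): this normal form lets
   the tactics below match vanishing and nonvanishing conditions syntactically. *)
Local Notation deg := (lincomb [:: d1; d2; d3; d4]).
Local Notation A := (br u1 u2).
Local Notation B := (br u3 u4).
Local Notation T := (br A B).

Lemma homog_eq0 i x : G i x -> i = 0 -> x = 0.
Proof. by move=> Gx i0; apply: G0; rewrite -i0. Qed.

(* Every subsum involving the fourth degree is w plus a {0,1,2}-combination of the
   d_i, hence nonzero because w is not in Dtilde. *)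
Lemma metabelian_lincomb va vb vc vd x1 x2 x3 x4 :
  G (deg va) x1 -> G (deg vb) x2 -> G (deg vc) x3 -> G (deg vd + w) x4 ->
  (forall b1 b2 b3 : bool, [|| b1, b2 | b3] ->
     deg (cselect b1 b2 b3 false va vb vc vd) != 0) ->
  all (leq^~ 2%N) (cselect true true true true va vb vc vd) ->
  br (br x1 x2) (br x3 x4) = 0.
Proof.
move=> Gx1 Gx2 Gx3 Gx4 free_neq0 le_c2.
apply: (smL _ Gx1 Gx2 Gx3 Gx4); apply/minus1_independentP.
move=> [|b1 [|b2 [|b3 [|b4 []]]]] //= _ has_b.
have -> : lincomb [:: deg va; deg vb; deg vc; deg vd + w]
            [:: b1 : nat; b2 : nat; b3 : nat; b4 : nat]
          = deg (cselect b1 b2 b3 b4 va vb vc vd) + w *+ b4.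
  by rewrite (lincomb4 (deg va)) /cselect !lincomb_cadd !lincomb_cscale mulrnDl !addrA.
case: b4 has_b => [_ | has_b]; last by rewrite addr0 free_neq0 //; rewrite !orbF in has_b.
rewrite mulr1n addrC lincomb_notin_Dtilde // => k.
apply: leq_trans (nth_cselect_le _ _ _ _ _ _ _ _ k) _.
have [lt_k | le_k] := ltnP k (size (cselect true true true true va vb vc vd)).
  exact: (all_nthP 0%N le_c2).
by rewrite nth_default.
Qed.

Ltac degE := rewrite ?lincomb4 ?mulr1n ?mulr0n ?addr0 ?add0r.

Ltac homog := degE; repeat first [assumption | apply: (G_br grL)].

(* A subsum of the first three degrees is a 0/1-combination of the d_i: either it does
   not involve d4, and is nonzero by independence of (d1, d2, d3), or it is one of the
   nondegeneracy hypotheses in the context. *)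
Ltac free_neq0 := move=> [] [] [] //= _; rewrite /cselect /cadd /cscale /=; first
  [ assumption
  | match goal with |- context [lincomb _ [:: ?x; ?y; ?z; 0%N]] =>
      exact: (lincomb_indep_neq0 _ (t := [:: x != 0%N; y != 0%N; z != 0%N]) ind123) end ].

Ltac vanish va vb vc vd :=
  apply: (metabelian_lincomb (va := va) (vb := vb) (vc := vc) (vd := vd));
  [homog | homog | homog | homog | free_neq0 | by []].

Lemma br_A_u3_u4y : br A (br u3 (br u4 y)) = 0.
Proof. by vanish [:: 1; 0; 0; 0]%N [:: 0; 1; 0; 0]%N [:: 0; 0; 1; 0]%N [:: 0; 0; 0; 1]%N. Qed.

Lemma br_A_u3y : br A (br u3 y) = 0.
Proof. by vanish [:: 1; 0; 0; 0]%N [:: 0; 1; 0; 0]%N [:: 0; 0; 1; 0]%N [:: 0; 0; 0; 0]%N. Qed.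

Lemma br_u1_B_eq0 : deg [:: 1; 0; 1; 1]%N = 0 -> br u1 B = 0.
Proof. by degE; rewrite -addrA; apply: homog_eq0; homog. Qed.

Lemma br_u2_B_eq0 : deg [:: 0; 1; 1; 1]%N = 0 -> br u2 B = 0.
Proof. by degE; rewrite -addrA; apply: homog_eq0; homog. Qed.

Section NondegenerateDegrees.
Hypotheses (nz4 : deg [:: 0; 0; 0; 1]%N != 0) (nz34 : deg [:: 0; 0; 1; 1]%N != 0)
  (nz1234 : deg [:: 1; 1; 1; 1]%N != 0).

Lemma br_A_By : br A (br B y) = 0.
Proof.
rewrite [br B y](br_leibnizl brL) (brDr brL) br_A_u3_u4y addr0.
rewrite (br_leibnizr brL) br_A_u3y (br0l brL) add0r.
have [z124 | nz124] := eqVneq (deg [:: 1; 1; 0; 1]%N) 0.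
  by rewrite (homog_eq0 (G_br grL (G_br grL G1 G2) G4)) ?(br0r brL) //; move: z124; degE.
apply: (br_eq0_sym brL).
by vanish [:: 1; 1; 0; 0]%N [:: 0; 0; 0; 1]%N [:: 0; 0; 1; 0]%N [:: 0; 0; 0; 0]%N.
Qed.

Lemma br_TyE : br T y = br (br A y) B.
Proof. by rewrite (br_leibnizl brL) br_A_By addr0. Qed.

Lemma br_Ay_B_nz124 : deg [:: 1; 1; 0; 1]%N != 0 -> br (br A y) B = 0.
Proof.
by move=> nz124; apply: (br_eq0_sym brL);
  vanish [:: 0; 0; 1; 0]%N [:: 0; 0; 0; 1]%N [:: 1; 1; 0; 0]%N [:: 0; 0; 0; 0]%N.
Qed.

Section Degree124Vanishes.
Hypothesis z124 : deg [:: 1; 1; 0; 1]%N = 0.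

Lemma deg14_neq0 : deg [:: 1; 0; 0; 1]%N != 0.
Proof.
exact: (lincomb_neq0_compl (c := [:: 0; 1; 0; 0]%N) (c' := [:: 1; 0; 0; 1]%N) z124
  (lincomb_indep_neq0 d4 (t := [:: false; true; false]) ind123 erefl isT)).
Qed.

Lemma deg24_neq0 : deg [:: 0; 1; 0; 1]%N != 0.
Proof.
exact: (lincomb_neq0_compl (c := [:: 1; 0; 0; 0]%N) (c' := [:: 0; 1; 0; 1]%N) z124
  (lincomb_indep_neq0 d4 (t := [:: true; false; false]) ind123 erefl isT)).
Qed.

Lemma br_u1y_B_eq0 : deg [:: 1; 0; 1; 1]%N != 0 -> br (br u1 y) B = 0.
Proof.
move=> nz134; have nz14 := deg14_neq0; apply: (br_eq0_sym brL).
by vanish [:: 0; 0; 1; 0]%N [:: 0; 0; 0; 1]%N [:: 1; 0; 0; 0]%N [:: 0; 0; 0; 0]%N.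
Qed.

Lemma br_u2y_B_eq0 : deg [:: 0; 1; 1; 1]%N != 0 -> br (br u2 y) B = 0.
Proof.
move=> nz234; have nz24 := deg24_neq0; apply: (br_eq0_sym brL).
by vanish [:: 0; 0; 1; 0]%N [:: 0; 0; 0; 1]%N [:: 0; 1; 0; 0]%N [:: 0; 0; 0; 0]%N.
Qed.

Lemma br_u1y_u2_B_eq0 : deg [:: 0; 1; 1; 1]%N != 0 -> br (br (br u1 y) u2) B = 0.
Proof.
move=> nz234; have nz24 := deg24_neq0.
apply/eqP; rewrite [br (br u1 y) u2](br_anti brL) (brNl brL) oppr_eq0; apply/eqP.
apply: (br_eq0_sym brL).
by vanish [:: 0; 0; 1; 0]%N [:: 0; 0; 0; 1]%N [:: 0; 1; 0; 0]%N [:: 1; 0; 0; 0]%N.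
Qed.

Lemma br_u1_u2y_B_eq0 : deg [:: 1; 0; 1; 1]%N != 0 -> br (br u1 (br u2 y)) B = 0.
Proof.
move=> nz134; have nz14 := deg14_neq0; apply: (br_eq0_sym brL).
by vanish [:: 0; 0; 1; 0]%N [:: 0; 0; 0; 1]%N [:: 1; 0; 0; 0]%N [:: 0; 1; 0; 0]%N.
Qed.

Lemma br_Ay_B_z124 :
  deg [:: 1; 0; 1; 1]%N != 0 \/ deg [:: 0; 1; 1; 1]%N != 0 -> br (br A y) B = 0.
Proof.
rewrite [br A y](br_leibnizl brL) (brDl brL).
have [z134 [//|nz234] | nz134 nz] := eqVneq (deg [:: 1; 0; 1; 1]%N) 0.
  rewrite br_u1y_u2_B_eq0 // add0r (br_leibnizl brL) (br_u1_B_eq0 z134) (br0l brL) add0r.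
  by rewrite br_u2y_B_eq0 // (br0r brL).
rewrite br_u1_u2y_B_eq0 // addr0.
have [z234 | nz234] := eqVneq (deg [:: 0; 1; 1; 1]%N) 0; last exact: br_u1y_u2_B_eq0.
rewrite (br_leibnizl brL) br_u1y_B_eq0 // (br0l brL) add0r.
by rewrite (br_u2_B_eq0 z234) (br0r brL).
Qed.

End Degree124Vanishes.
End NondegenerateDegrees.

Lemma br_Ty_eq0 : br T y = 0.
Proof.
have [z4 | nz4] := eqVneq (deg [:: 0; 0; 0; 1]%N) 0.
  by rewrite (homog_eq0 G4) ?(br0r brL) ?(br0l brL) //; move: z4; degE.
have [z34 | nz34] := eqVneq (deg [:: 0; 0; 1; 1]%N) 0.
  by rewrite (homog_eq0 (G_br grL G3 G4)) ?(br0r brL) ?(br0l brL) //; move: z34; degE.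
have [z1234 | nz1234] := eqVneq (deg [:: 1; 1; 1; 1]%N) 0.
  rewrite (homog_eq0 (G_br grL (G_br grL G1 G2) (G_br grL G3 G4))) ?(br0l brL) //.
  by move: z1234; degE; rewrite !addrA.
have [z134 | nz134] := eqVneq (deg [:: 1; 0; 1; 1]%N) 0;
  have [z234 | nz234] := eqVneq (deg [:: 0; 1; 1; 1]%N) 0.
- rewrite [T](br_leibnizl brL) (br_u1_B_eq0 z134) (br_u2_B_eq0 z234).
  by rewrite (br0l brL) (br0r brL) addr0 (br0l brL).
all: rewrite br_TyE //; have [z124 | nz124] := eqVneq (deg [:: 1; 1; 0; 1]%N) 0;
  [apply: br_Ay_B_z124 => //; by [left | right] | exact: br_Ay_B_nz124].
Qed.

End AnnihilatorOfT.

Section Spanning.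
Variables (K : fieldType) (L : lmodType K) (m : nat) (br : L -> L -> L)
  (G : 'I_m.+1 -> L -> Prop).
Hypotheses (brL : is_lie_bracket br) (grL : is_grading br G).
Variables (D : 'I_m.+1 -> Prop) (T : L).
Hypothesis brT_eq0 : forall w y, G w y -> ~ D w -> br T y = 0.

Definition admissible (p : L * L) : Prop := exists u j : 'I_m.+1,
  D j /\ (D u \/ D (j - u)) /\ G u p.1 /\ G (j - u) p.2.

Definition homogeneous_pair (p : L * L) : Prop :=
  exists w i : 'I_m.+1, G w p.1 /\ G (i - w) p.2.

Definition all_admissible (s : seq (L * L)) : Prop :=
  forall k, (k < size s)%N -> admissible (nth (0, 0) s k).

Definition tprod (s : seq (L * L)) : L := lnprod br T [seq br p.1 p.2 | p <- s].

Definition spanned (n : nat) (v : L) : Prop :=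
  exists cs : seq (K * seq (L * L)),
    (forall c, c \in cs -> (size c.2 <= n)%N /\ all_admissible c.2) /\
    v = \sum_(c <- cs) c.1 *: tprod c.2.

Lemma G_pair u j (p : L * L) : G u p.1 -> G (j - u) p.2 -> G j (br p.1 p.2).
Proof. by move=> Gp1 Gp2; rewrite -[j](subrK u) addrC; apply: (G_br grL). Qed.

Lemma tprod_rcons s p : tprod (rcons s p) = br (tprod s) (br p.1 p.2).
Proof. by rewrite /tprod map_rcons /lnprod foldl_rcons. Qed.

Lemma spanned0 n : spanned n 0.
Proof. by exists [::]; rewrite big_nil. Qed.

Lemma spannedD n v v' : spanned n v -> spanned n v' -> spanned n (v + v').
Proof.
move=> [cs [cs_ok ->]] [cs' [cs'_ok ->]]; exists (cs ++ cs'); split; last by rewrite big_cat.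
by move=> c; rewrite mem_cat => /orP[/cs_ok | /cs'_ok].
Qed.

Lemma spannedZ n a v : spanned n v -> spanned n (a *: v).
Proof.
move=> [cs [cs_ok ->]]; exists [seq (a * c.1, c.2) | c <- cs]; split.
  by move=> c /mapP [c' /cs_ok ? ->].
by rewrite big_map scaler_sumr; apply: eq_bigr => c _; rewrite scalerA.
Qed.

Lemma spannedW n n' v : (n <= n')%N -> spanned n v -> spanned n' v.
Proof.
move=> le_n [cs [cs_ok ->]]; exists cs; split=> // c /cs_ok [le_c adm_c].
by split=> //; apply: leq_trans le_n.
Qed.

Lemma spanned_tprod n s : all_admissible s -> (size s <= n)%N -> spanned n (tprod s).
Proof.
move=> adm le_s; exists [:: (1, s)]; split; last by rewrite big_seq1 scale1r.
by move=> c; rewrite inE => /eqP ->.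
Qed.

Lemma spanned_br n n' v x : spanned n v ->
    (forall s, all_admissible s -> (size s <= n)%N -> spanned n' (br (tprod s) x)) ->
  spanned n' (br v x).
Proof.
move=> [cs [cs_ok ->]] span_x; rewrite (br_suml brL).
elim: cs cs_ok => [|c cs IHcs] cs_ok; first by rewrite big_nil; apply: spanned0.
rewrite big_cons; apply: spannedD.
  have [le_c adm_c] := cs_ok c (mem_head _ _).
  by rewrite (brZl brL); apply: spannedZ; exact: span_x.
by apply: IHcs => c' c'_in; apply: cs_ok; rewrite inE c'_in orbT.
Qed.

Lemma spanned_br_annihilator s g x :
  all_admissible s -> G g x -> br T x = 0 -> spanned (size s) (br (tprod s) x).
Proof.
elim/last_ind: s g x => [|s p IHs] g x.
  by move=> _ _ Tx; rewrite /tprod /lnprod /= Tx; apply: spanned0.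
move=> /forall_nth_rcons [adm_s [u [j [Dj [Du [Gp1 Gp2]]]]]] Gx Tx.
rewrite tprod_rcons (br_leibnizl brL); apply: spannedD.
  apply: (spanned_br (IHs _ _ adm_s Gx Tx)) => s' adm_s' le_s'.
  rewrite -tprod_rcons; apply: spanned_tprod; last by rewrite !size_rcons.
  by apply/forall_nth_rcons; split=> //; exists u, j.
have Gpx := G_br grL (G_pair Gp1 Gp2) Gx.
have [Djg | not_Djg] := classic (D (j + g)); last first.
  by apply: spannedW (IHs _ _ adm_s Gpx (brT_eq0 Gpx not_Djg)); rewrite size_rcons.
rewrite -(tprod_rcons s (br p.1 p.2, x)); apply: spanned_tprod; last by rewrite !size_rcons.
apply/forall_nth_rcons; split=> //; exists j, (j + g); do !split=> //; first by left.
  exact: G_pair Gp1 Gp2.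
by rewrite /= [j + g]addrC addrK.
Qed.

Lemma br_T_pair_eq0 p w i :
  G w p.1 -> G (i - w) p.2 -> ~ admissible p -> br T (br p.1 p.2) = 0.
Proof.
move=> Gp1 Gp2 not_adm.
have [Di | not_Di] := classic (D i); last exact: brT_eq0 (G_pair Gp1 Gp2) not_Di.
have not_Dw : ~ D w by move=> Dw; apply: not_adm; exists w, i; do !split=> //; left.
have not_Diw : ~ D (i - w) by move=> Diw; apply: not_adm; exists w, i; do !split=> //; right.
rewrite (br_leibnizr brL) (brT_eq0 Gp1 not_Dw) (brT_eq0 Gp2 not_Diw).
by rewrite (br0l brL) (br0r brL) addr0.
Qed.

Lemma spanned_tprod_homog s :
  (forall k, (k < size s)%N -> homogeneous_pair (nth (0, 0) s k)) ->
  spanned (size s) (tprod s).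
Proof.
elim/last_ind: s => [|s p IHs]; first by move=> _; apply: spanned_tprod.
move=> /forall_nth_rcons [homog_s [w [i [Gp1 Gp2]]]].
rewrite tprod_rcons; apply: (spanned_br (IHs homog_s)) => s' adm_s' le_s'.
have [adm_p | not_adm] := classic (admissible p).
  rewrite -tprod_rcons; apply: spanned_tprod; last by rewrite !size_rcons.
  by apply/forall_nth_rcons.
have Tp := br_T_pair_eq0 Gp1 Gp2 not_adm.
by apply: spannedW (spanned_br_annihilator adm_s' (G_pair Gp1 Gp2) Tp); rewrite size_rcons leqW.
Qed.

End Spanning.

Theorem lemma4 (K : fieldType) (L : lmodType K) (m : nat)
  (br : L -> L -> L) (G : 'I_m.+1 -> L -> Prop) :
  odd m.+1 ->
  is_lie_bracket br ->
  is_grading br G ->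
  (forall x, G 0 x -> x = 0) ->
  selective_metabelian br G ->
  forall (d1 d2 d3 d4 : 'I_m.+1),
  minus1_independent [:: d1; d2; d3] ->
  Dset [:: d1; d2; d3] d4 ->
  forall (u1 u2 u3 u4 : L), G d1 u1 -> G d2 u2 -> G d3 u3 -> G d4 u4 ->
  forall (yz : seq (L * L)),
  (forall k, (k < size yz)%N -> exists w i : 'I_m.+1,
      G w (nth (0, 0) yz k).1 /\ G (i - w) (nth (0, 0) yz k).2) ->
  exists cs : seq (K * seq (L * L)),
    (forall c, c \in cs -> (size c.2 <= size yz)%N /\
       forall k, (k < size c.2)%N -> exists u j : 'I_m.+1,
         Dtilde [:: d1; d2; d3; d4] j /\
         (Dtilde [:: d1; d2; d3; d4] u \/ Dtilde [:: d1; d2; d3; d4] (j - u)) /\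
         G u (nth (0, 0) c.2 k).1 /\ G (j - u) (nth (0, 0) c.2 k).2) /\
    lnprod br (br (br u1 u2) (br u3 u4)) [seq br p.1 p.2 | p <- yz] =
    \sum_(c <- cs) c.1 *: lnprod br (br (br u1 u2) (br u3 u4))
                                    [seq br p.1 p.2 | p <- c.2].
Proof.
move=> _ brL grL G0 smL d1 d2 d3 d4 ind123 _ u1 u2 u3 u4 G1 G2 G3 G4 yz homog_yz.
apply: (spanned_tprod_homog brL grL _ homog_yz) => w y Gy w_notin.
exact (br_Ty_eq0 brL grL G0 smL ind123 G1 G2 G3 G4 Gy w_notin).
Qed.
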